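(* Let $g$ be a generator satisfying (H1a) ${\rm d}P\times{\rm d}t$-a.e., for each $(y_0,z_0)\in\mathbb{R}^{1+d}$, $\lim_{(y,z)\to(y_0^-,z_0)}g(\omega,t,y,z)=g(\omega,t,y_0,z_0)$ and $\liminf_{(y,z)\to(y_0^+,z_0)}g(\omega,t,y,z)\ge g(\omega,t,y_0,z_0)$; and (H5) there are constants $C>0$, $\alpha\in(0,1)$ and a nonnegative progressively measurable process $(f_t)\in L^1([0,T]\times\Omega)$ such that ${\rm d}P\times{\rm d}t$-a.e., $|g(\omega,t,y,z)|\le f_t(\omega)+C(|y|+|z|^\alpha)$ for all $(y,z)$. For $n\ge1$ define $g_n(\omega,t,y,z):=\inf_{(u,v)\in\mathbb{Q}^{1+d}}\{g(\omega,t,u,v)+nC(|y-u|+|z-v|^\alpha)\}$, with $C,\alpha$ from (H5). Then: (i) for each $n\ge1$, $g_n$ maps $\Omega\times[0,T]\times\mathbb{R}\times\mathbb{R}^d$ into $\mathbb{R}$, and for each $(y,z)$, $g_n(\cdot,\cdot,y,z)$ is $(\mathcal{F}_t)$-progressively measurable; (ii) for each $n\ge1$ and each $(y,z)$, ${\rm d}P\times{\rm d}t$-a.e., $g_n(\omega,t,y,z)\le g_{n+1}(\omega,t,y,z)\le g(\omega,t,y,z)$ and $|g_n(\omega,t,y,z)|\le f_t(\omega)+C(|y|+|z|^\alpha)$; (iii) for each $y_1,y_2,z_1,z_2$, ${\rm d}P\times{\rm d}t$-a.e., $|g_n(\omega,t,y_1,z_1)-g_n(\omega,t,y_2,z_2)|\le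 nC(|y_1-y_2|+|z_1-z_2|^\alpha)$; (iv) if $(y_n,z_n)\to(y_0^-,z_0)$ as $n\to\infty$, then $\lim_{n\to\infty}g_n(\omega,t,y_n,z_n)=g(\omega,t,y_0,z_0)$ ${\rm d}P\times{\rm d}t$-a.e.
   Context: $T>0$, $d\ge1$; $(\Omega,\mathcal{F},P)$ complete probability space with standard $d$-dimensional Brownian motion and augmented natural filtration $(\mathcal{F}_t)$. A generator is a map $g:\Omega\times[0,T]\times\mathbb{R}\times\mathbb{R}^d\to\mathbb{R}$, $(\mathcal{F}_t)$-progressively measurable for each $(y,z)$. The notation $(y,z)\to(y_0^-,z_0)$ (resp. $(y_0^+,z_0)$) means $y\to y_0$ with $y<y_0$ (resp. $y>y_0$) and $z\to z_0$. *)

From HB Require Import structures.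
From mathcomp Require Import all_boot all_order all_algebra.
From mathcomp Require Import all_classical all_reals all_analysis.
Import Order.TTheory GRing.Theory Num.Theory.
Import numFieldNormedType.Exports.
Local Open Scope classical_set_scope.
Local Open Scope ring_scope.

Set Implicit Arguments.
Unset Strict Implicit.
Unset Printing Implicit Defensive.

Section Defs.
Context {R : realType} {d0 : measure_display} {Om : measurableType d0}.

Definition is_filtration (F : R -> set (set Om)) : Prop :=
  (forall t, sigma_algebra setT (F t)) /\
  (forall t, F t `<=` measurable) /\
  (forall s t, s <= t -> F s `<=` F t).

(* Rectangles A x E with A a Borel subset of [0,t] and E in F_t;
   they generate B([0,t]) (x) F_t (on [0,t] x Om). *)
Definition prog_rect (F : R -> set (set Om)) (t : R) : set (set (R * Om)) :=
  [set C | exists A E, measurable A /\ A `<=` `[0, t] /\ F t E /\ C = A `*` E].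

Definition progressive (F : R -> set (set Om)) (T : R) (X : Om -> R -> R) : Prop :=
  forall t, 0 <= t <= T -> forall B : set R, measurable B ->
    <<s prog_rect F t >> [set p : R * Om | 0 <= p.1 <= t /\ B (X p.2 p.1)].

Definition ae_PdT (P : probability Om R) (T : R) (Q : Om -> R -> Prop) : Prop :=
  {ae (P \x (@lebesgue_measure R))%E, forall p : Om * R, 0 <= p.2 <= T -> Q p.1 p.2}.

Definition enorm (d : nat) (z : 'rV[R]_d) : R := Num.sqrt (\sum_(i < d) z ord0 i ^+ 2).

Definition Qset : set R := [set u | exists q : rat, u = ratr q].
Definition Qrow (d : nat) : set 'rV[R]_d :=
  [set v | forall i, exists q : rat, v ord0 i = ratr q].

Definition gn_inf (d : nat) (g : Om -> R -> R -> 'rV[R]_d -> R) (C alpha : R)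
    (n : nat) (w : Om) (t y : R) (z : 'rV[R]_d) : \bar R :=
  ereal_inf [set x | exists u v, Qset u /\ Qrow v /\
     x = (g w t u v + n%:R * C * (`|y - u| + enorm (z - v) `^ alpha))%:E].

(* g_n as a real-valued map (the infimum, read as a real number; it is
   finite dP x dt-a.e., see statement (i)). *)
Definition gn (d : nat) (g : Om -> R -> R -> 'rV[R]_d -> R) (C alpha : R)
    (n : nat) (w : Om) (t y : R) (z : 'rV[R]_d) : R :=
  fine (gn_inf g C alpha n w t y z).

End Defs.

(* As
   [(a + b)^alpha <= a^alpha + b^alpha] for [alpha <= 1], the penalty obeys a
   triangle inequality; with the growth bound (H5) this gives finiteness, the
   bounds of (ii) and the Lipschitz estimate (iii).  Left-continuity lets
   rational points approach [(y, z)] from the left, whence [g_n <= g] and the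
   upper half of (iv).  Left-continuity and right lower semicontinuity make [g]
   lower semicontinuous, so for large [n] near-minimizers are forced close to
   [(y0, z0)]: this is the lower half of (iv).  Progressive measurability holds
   because the infimum is countable. *)

From HB Require Import structures.
From mathcomp Require Import all_boot all_order all_algebra.
From mathcomp Require Import all_classical all_reals all_analysis.
From mathcomp Require Import measurable_realfun ring lra.
Import Order.TTheory GRing.Theory Num.Theory.
Import numFieldNormedType.Exports.
Local Open Scope classical_set_scope.
Local Open Scope ring_scope.

Set Implicit Arguments.
Unset Strict Implicit.
Unset Printing Implicit Defensive.

Lemma powR_subadd (R : realType) (a b r : R) : 0 < r <= 1 -> 0 <= a -> 0 <= b ->
  (a + b) `^ r <= a `^ r + b `^ r.
Proof.
move=> /andP[r0 r1] a0 b0.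
have [->|b_neq0] := eqVneq b 0; first by rewrite !addr0 powR0 ?gt_eqF// addr0.
have s0 : 0 < a + b by rewrite ltr_pwDr// lt_neqAle eq_sym b_neq0.
have share x : 0 <= x <= a + b -> (a + b) `^ r * (x / (a + b)) <= x `^ r.
  case/andP=> x0 xs; have [->|x_neq0] := eqVneq x 0; first by rewrite mul0r mulr0 powR_ge0.
  have x_pos : 0 < x by rewrite lt_neqAle eq_sym x_neq0.
  rewrite -[X in _ <= X `^ r](divfK (lt0r_neq0 s0) x) powRM ?divr_ge0 ?(ltW s0)//.
  rewrite [_ * (x / _)]mulrC ler_wpM2r ?powR_ge0//.
  by rewrite ger1_powR// divr_gt0//= ler_pdivrMr// mul1r.
apply: le_trans (lerD (share a _) (share b _)); last 2 first.
- by rewrite a0 lerDl.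
- by rewrite b0 lerDr.
by rewrite -mulrDr -mulrDl divff ?gt_eqF// mulr1.
Qed.

Section euclidean_norm.
Variables (R : realType) (d : nat).
Implicit Types (x y z : 'rV[R]_d) (a b : 'I_d -> R).

Lemma sum_sqr_ge0 a : 0 <= \sum_i a i ^+ 2.
Proof. by apply: sumr_ge0 => i _; exact: sqr_ge0. Qed.

Lemma sum_sqr_eq0 a : \sum_i a i ^+ 2 = 0 -> forall i, a i = 0.
Proof.
move=> /psumr_eq0P-/(_ (fun i _ => sqr_ge0 (a i))) a0 i.
by apply/eqP; rewrite -sqrf_eq0 a0.
Qed.

Lemma cauchy_schwarz a b :
  \sum_i a i * b i <= Num.sqrt (\sum_i a i ^+ 2) * Num.sqrt (\sum_i b i ^+ 2).
Proof.
set A := \sum_i a i ^+ 2; set B := \sum_i b i ^+ 2.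
have [A0|A_neq0] := eqVneq A 0.
  by rewrite big1 ?mulr_ge0 ?sqrtr_ge0// => i _; rewrite (sum_sqr_eq0 A0) mul0r.
have [B0|B_neq0] := eqVneq B 0.
  by rewrite big1 ?mulr_ge0 ?sqrtr_ge0// => i _; rewrite (sum_sqr_eq0 B0) mulr0.
set sA := Num.sqrt A; set sB := Num.sqrt B.
have sAB0 : 0 < sA * sB.
  by rewrite mulr_gt0// sqrtr_gt0 lt_neqAle eq_sym ?A_neq0 ?B_neq0 sum_sqr_ge0.
have [eA eB] : sA ^+ 2 = A /\ sB ^+ 2 = B by rewrite !sqr_sqrtr ?sum_sqr_ge0.
have amgm i : a i * b i * (sA * sB) <= (a i ^+ 2 * B + b i ^+ 2 * A) / 2.
  have := sqr_ge0 (a i * sB - b i * sA); rewrite -eA -eB; nra.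
rewrite -(ler_pM2r sAB0) mulr_suml; apply: le_trans (ler_sum _ (fun i _ => amgm i)) _.
rewrite -mulr_suml big_split /= -!mulr_suml -/A -/B -eA -eB; lra.
Qed.

Lemma enorm_ge0 x : 0 <= enorm x.
Proof. exact: sqrtr_ge0. Qed.

Lemma enormN x : enorm (- x) = enorm x.
Proof. by rewrite /enorm; congr Num.sqrt; apply: eq_bigr => i _; rewrite mxE sqrrN. Qed.

Lemma enormB x y : enorm (x - y) = enorm (y - x).
Proof. by rewrite -enormN opprB. Qed.

Lemma enormD x y : enorm (x + y) <= enorm x + enorm y.
Proof.
have [A0 B0] := (sum_sqr_ge0 (x ord0), sum_sqr_ge0 (y ord0)).
rewrite /enorm -(ger0_norm (addr_ge0 (sqrtr_ge0 _) (sqrtr_ge0 _))) -sqrtr_sqr.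
rewrite ler_sqrt ?sqr_ge0// sqrrD !sqr_sqrtr//.
have -> : \sum_i (x + y) ord0 i ^+ 2 =
    \sum_i x ord0 i ^+ 2 + 2 * \sum_i x ord0 i * y ord0 i + \sum_i y ord0 i ^+ 2.
  rewrite mulr_sumr -!big_split /=; apply: eq_bigr => i _; rewrite mxE; ring.
have := cauchy_schwarz (x ord0) (y ord0); lra.
Qed.

Lemma enorm_triangle x y z : enorm (x - z) <= enorm (x - y) + enorm (y - z).
Proof. by apply: le_trans (enormD _ _); rewrite addrA subrK. Qed.

Lemma norm_le_enorm x : `|x| <= enorm x.
Proof.
rewrite [`|x|]mx_normrE; apply: bigmax_le => [|[i j] _]; first exact: enorm_ge0.
rewrite (ord1 i) /enorm -sqrtr_sqr ler_sqrt ?sum_sqr_ge0//.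
by rewrite (bigD1 j)//= lerDl sumr_ge0// => k _; rewrite sqr_ge0.
Qed.

Lemma enorm_le_norm x : enorm x <= d%:R * `|x|.
Proof.
have x0 := normr_ge0 x.
rewrite /enorm -(ger0_norm (mulr_ge0 (ler0n _ d) x0)) -sqrtr_sqr ler_sqrt ?sqr_ge0//.
apply: (@le_trans _ _ (\sum_(i < d) `|x| ^+ 2)).
  apply: ler_sum => i _; rewrite -real_normK ?num_real// lerXn2r ?nnegrE//.
  by rewrite [`|x|]mx_normrE (le_bigmax _ (fun ij : 'I_1 * 'I_d => `|x ij.1 ij.2|) (ord0, i)).
rewrite sumr_const card_ord exprMn -[_ *+ d]mulr_natl ler_wpM2r ?sqr_ge0//.
by case: d {x x0} => [|n]; rewrite ?expr2 ?mulr0// ler_peMl// ler1n.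
Qed.

End euclidean_norm.

Lemma rat_approx_left (R : realType) (d : nat) (y : R) (z : 'rV[R]_d) (m : R) :
  0 < m -> exists u v, Qset u /\ Qrow v /\ y - m < u < y /\ enorm (z - v) < m.
Proof.
move=> m0; have [q /itvP hq] := @rat_in_itvoo R (y - m) y ltac:(by rewrite gtrBl).
pose e := m / d.+1%:R.
have e0 : 0 < e by rewrite divr_gt0.
have de_lt : d%:R * e < m.
  have : e * d.+1%:R = m by rewrite divfK ?pnatr_eq0.
  rewrite -natr1 mulrDr mulr1 mulrC; lra.
have /choice[r hr] (i : 'I_d) : exists r : rat, `|z ord0 i - ratr r| <= e.
  have [r /itvP hr] :=
    @rat_in_itvoo R (z ord0 i - e) (z ord0 i + e) ltac:(by rewrite ltrD2l gtrN).
  by exists r; rewrite ler_distlC !ltW ?hr.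
exists (ratr q), (\row_i ratr (r i)); split; first by exists q.
split; first by move=> i; exists (r i); rewrite mxE.
split; first by rewrite !hq.
apply: le_lt_trans (enorm_le_norm _) (le_lt_trans _ de_lt).
rewrite ler_wpM2l// [`|_|]mx_normrE; apply: bigmax_le => [|[i j] _ /=]; first exact: ltW.
by rewrite (ord1 i) !mxE.
Qed.

Section holder_distance.
Variables (R : realType) (d : nat) (al : R).
Hypotheses (al_gt0 : 0 < al) (al_le1 : al <= 1).

Definition pdist (y : R) (z : 'rV[R]_d) (u : R) (v : 'rV[R]_d) : R :=
  `|y - u| + enorm (z - v) `^ al.

Lemma pdist_ge0 y z u v : 0 <= pdist y z u v.
Proof. by rewrite addr_ge0 ?powR_ge0. Qed.

Lemma pdistC y z u v : pdist y z u v = pdist u v y z.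
Proof. by rewrite /pdist distrC enormB. Qed.

Lemma enorm_powR_triangle (x y z : 'rV[R]_d) :
  enorm (x - z) `^ al <= enorm (x - y) `^ al + enorm (y - z) `^ al.
Proof.
have al01 : 0 < al <= 1 by rewrite al_gt0.
apply: le_trans _ (powR_subadd al01 (enorm_ge0 _) (enorm_ge0 _)).
by apply: ge0_ler_powR; rewrite ?nnegrE ?addr_ge0 ?enorm_ge0 ?enorm_triangle ?ltW.
Qed.

Lemma pdist_triangle y1 z1 y2 z2 u v :
  pdist y1 z1 u v <= pdist y1 z1 y2 z2 + pdist y2 z2 u v.
Proof. by rewrite addrACA lerD ?ler_distD ?enorm_powR_triangle. Qed.

Lemma pdist_small k e : 0 <= k -> 0 < e -> exists2 m, 0 < m &
  forall y z u v, `|y - u| <= m -> enorm (z - v) <= m -> k * pdist y z u v <= e.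
Proof.
move=> k0 e0; pose h := e / (2 * (k + 1)).
have h0 : 0 < h by rewrite divr_gt0// mulr_gt0// ltr_wpDl.
have kh : k * (2 * h) <= e.
  have -> : e = (k + 1) * (2 * h) by rewrite /h; field; rewrite gt_eqF ?ltr_wpDl.
  have : 0 <= 2 * h by rewrite mulr_ge0 ?ltW.
  rewrite mulrDl mul1r; lra.
exists (Num.min h (h `^ al^-1)) => [|y z u v]; first by rewrite lt_min h0 powR_gt0.
rewrite !le_min => /andP[yu _] /andP[_ zv].
have zv' : enorm (z - v) `^ al <= h.
  apply: le_trans (ge0_ler_powR (ltW al_gt0) _ _ zv) _; rewrite ?nnegrE ?enorm_ge0 ?powR_ge0//.
  by rewrite -powRrM mulVf ?gt_eqF// powRr1 ?(ltW h0).
apply: le_trans kh; rewrite ler_wpM2l// /pdist; lra.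
Qed.

Lemma pdist_ge_far y0 z0 y z u v h : 0 < h ->
  `|y - y0| < h -> `|z0 - z| < h -> ~ (`|u - y0| < 2 * h /\ `|z0 - v| < 2 * h) ->
  Num.min h (h `^ al) <= pdist y z u v.
Proof.
move=> h0 yy zz /not_andP[/negP|/negP]; rewrite -leNgt => far; rewrite ge_min /pdist.
  apply/orP; left.
  have := ler_distD y u y0; rewrite [`|u - y|]distrC.
  have := powR_ge0 (enorm (z - v)) al; lra.
apply/orP; right.
have hz : h <= enorm (z - v).
  apply: le_trans (norm_le_enorm _); have := ler_distD z z0 v; lra.
by apply: ler_wpDl => //; apply: ge0_ler_powR;
  rewrite ?nnegrE ?enorm_ge0 ?(ltW h0) ?(ltW al_gt0).
Qed.

End holder_distance.

Section one_sided_boxes.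
Variables (R : realType) (d : nat) (P : R * 'rV[R]_d -> Prop) (y0 : R) (z0 : 'rV[R]_d).

Lemma near_at_left_box : (\forall p \near filter_prod y0^'- (nbhs z0), P p) ->
  exists2 e, 0 < e & forall u v, y0 - e < u < y0 -> `|z0 - v| < e -> P (u, v).
Proof.
case=> [[A B]] /= [/nbhs_ballP[e1 e1_gt0 A_e1] /nbhs_ballP[e2 e2_gt0 B_e2]] AB.
exists (Num.min e1 e2) => [|u v /andP[yu uy] zv]; first by rewrite lt_min e1_gt0.
have [m1 m2] : Num.min e1 e2 <= e1 /\ Num.min e1 e2 <= e2 by rewrite !ge_min !lexx orbT.
apply: AB; split => /=.
  by apply: A_e1 => //; rewrite /ball /= ger0_norm; lra.
by apply: B_e2; rewrite -ball_normE /ball_ /=; lra.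
Qed.

Lemma near_at_right_box : (\forall p \near filter_prod y0^'+ (nbhs z0), P p) ->
  exists2 e, 0 < e & forall u v, y0 < u < y0 + e -> `|z0 - v| < e -> P (u, v).
Proof.
case=> [[A B]] /= [/nbhs_ballP[e1 e1_gt0 A_e1] /nbhs_ballP[e2 e2_gt0 B_e2]] AB.
exists (Num.min e1 e2) => [|u v /andP[yu uy] zv]; first by rewrite lt_min e1_gt0.
have [m1 m2] : Num.min e1 e2 <= e1 /\ Num.min e1 e2 <= e2 by rewrite !ge_min !lexx orbT.
apply: AB; split => /=.
  by apply: A_e1 => //; rewrite /ball /= distrC ger0_norm; lra.
by apply: B_e2; rewrite -ball_normE /ball_ /=; lra.
Qed.

End one_sided_boxes.

Section inf_convolution.
Variables (R : realType) (d : nat) (al : R) (G : R -> 'rV[R]_d -> R).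
Hypotheses (al_gt0 : 0 < al) (al_le1 : al <= 1).

Definition inf_conv (k y : R) (z : 'rV[R]_d) : \bar R :=
  ereal_inf [set x | exists u v, Qset u /\ Qrow v /\ x = (G u v + k * pdist al y z u v)%:E].

Definition inf_convr (k y : R) (z : 'rV[R]_d) : R := fine (inf_conv k y z).

Variables (phi C : R).
Hypothesis C_gt0 : 0 < C.
Hypothesis G_growth : forall y z, `|G y z| <= phi + C * (`|y| + enorm z `^ al).

Lemma G_ge_growth y z u v :
  - (phi + C * (`|y| + enorm z `^ al)) - C * pdist al y z u v <= G u v.
Proof.
have := G_growth u v; rewrite ler_norml => /andP[h _].
have hu : `|u| + enorm v `^ al <= pdist al y z u v + (`|y| + enorm z `^ al).
  have := pdist_triangle al_gt0 al_le1 u v y z 0 0.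
  by rewrite [pdist al u v y z]pdistC /pdist !subr0.
apply: le_trans _ h; rewrite -opprD lerN2 -addrA lerD2l -mulrDr.
by rewrite [X in _ <= _ * X]addrC ler_pM2l.
Qed.

Lemma inf_conv_ge k y z : C <= k ->
  ((- (phi + C * (`|y| + enorm z `^ al)))%:E <= inf_conv k y z)%E.
Proof.
move=> Ck; apply: le_ereal_inf_tmp => _ [u [v [_ [_ ->]]]]; rewrite lee_fin.
have := G_ge_growth y z u v; have := pdist_ge0 al y z u v; nra.
Qed.

Lemma inf_conv_fin k y z : C <= k -> inf_conv k y z \is a fin_num.
Proof.
move=> Ck; rewrite fin_numElt; apply/andP; split.
  by apply: lt_le_trans (inf_conv_ge y z Ck); exact: ltNyr.
apply: le_lt_trans (ltry (G 0 0 + k * pdist al y z 0 0)).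
apply: ereal_inf_lbound; exists 0, 0; split; first by exists 0%Q; rewrite rmorph0.
by split=> // i; exists 0%Q; rewrite rmorph0 mxE.
Qed.

Lemma inf_convr_lbound k y z u v : C <= k -> Qset u -> Qrow v ->
  inf_convr k y z <= G u v + k * pdist al y z u v.
Proof.
move=> Ck Qu Qv; rewrite -lee_fin fineK ?inf_conv_fin//.
by apply: ereal_inf_lbound; exists u, v.
Qed.

Lemma le_inf_convr k y z c : C <= k ->
  (forall u v, Qset u -> Qrow v -> c <= G u v + k * pdist al y z u v) ->
  c <= inf_convr k y z.
Proof.
move=> Ck le_c; rewrite -lee_fin fineK ?inf_conv_fin//.
by apply: le_ereal_inf_tmp => _ [u [v [Qu [Qv ->]]]]; rewrite lee_fin le_c.
Qed.

Lemma inf_convr_ge k y z : C <= k ->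
  - (phi + C * (`|y| + enorm z `^ al)) <= inf_convr k y z.
Proof. by move=> Ck; rewrite -lee_fin fineK ?inf_conv_fin ?inf_conv_ge. Qed.

Lemma inf_convr_homo k1 k2 y z : C <= k1 -> k1 <= k2 ->
  inf_convr k1 y z <= inf_convr k2 y z.
Proof.
move=> Ck1 k12; apply: le_inf_convr (le_trans Ck1 k12) _ => u v Qu Qv.
apply: le_trans (inf_convr_lbound y z Ck1 Qu Qv) _.
by rewrite lerD2l ler_wpM2r ?pdist_ge0.
Qed.

Lemma inf_convr_lipschitz k y1 z1 y2 z2 : C <= k ->
  `|inf_convr k y1 z1 - inf_convr k y2 z2| <= k * pdist al y1 z1 y2 z2.
Proof.
have k_gt0 : C <= k -> 0 < k by move/(lt_le_trans C_gt0).
suff one_side a1 b1 a2 b2 : C <= k ->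
    inf_convr k a1 b1 - k * pdist al a1 b1 a2 b2 <= inf_convr k a2 b2.
  move=> Ck; rewrite ler_distlC one_side//= -lerBlDr -(pdistC al y2 z2).
  exact: one_side.
move=> Ck; apply: le_inf_convr => // u v Qu Qv.
rewrite lerBlDr; apply: le_trans (inf_convr_lbound a1 b1 Ck Qu Qv) _.
rewrite -addrA lerD2l -mulrDr ler_pM2l ?k_gt0// [leRHS]addrC.
exact: pdist_triangle.
Qed.

Hypothesis G_left_cont : forall y0 z0,
  (fun p => G p.1 p.2) @ filter_prod y0^'- (nbhs z0) --> G y0 z0.

Definition right_lsc_at (y0 : R) (z0 : 'rV[R]_d) : Prop :=
  ((G y0 z0)%:E <= limf_einf (fun p => (G p.1 p.2)%:E) (filter_prod y0^'+ (nbhs z0)))%E.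

Lemma G_left_box y0 z0 e : 0 < e -> exists2 δ, 0 < δ &
  forall u v, y0 - δ < u < y0 -> `|z0 - v| < δ -> `|G y0 z0 - G u v| < e.
Proof.
move=> e0; apply: (near_at_left_box (P := fun p => `|G y0 z0 - G p.1 p.2| < e)).
by move/cvgrPdist_lt: (@G_left_cont y0 z0); apply.
Qed.

Lemma G_right_box y0 z0 e : right_lsc_at y0 z0 -> 0 < e -> exists2 δ, 0 < δ &
  forall u v, y0 < u < y0 + δ -> `|z0 - v| < δ -> G y0 z0 - e < G u v.
Proof.
rewrite /right_lsc_at limf_einfE => lsc e0.
apply: (near_at_right_box (P := fun p => G y0 z0 - e < G p.1 p.2)).
have /ereal_sup_gt[_ [V FV <-] ltV] : ((G y0 z0 - e)%:E <
    ereal_sup [set ereal_inf ((fun p => (G p.1 p.2)%:E) @` V) |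
               V in filter_prod y0^'+ (nbhs z0)])%E.
  by apply: lt_le_trans lsc; rewrite lte_fin gtrBl.
apply: filterS FV => p Vp; rewrite -lte_fin; apply: lt_le_trans ltV _.
by apply: ereal_inf_lbound; exists p.
Qed.

Lemma inf_convr_upper_near y0 z0 e : 0 < e -> exists2 δ, 0 < δ &
  forall k y z, C <= k -> y0 - δ < y <= y0 -> `|z0 - z| < δ ->
  inf_convr k y z <= G y0 z0 + e.
Proof.
move=> e0; have e20 : 0 < e / 2 by rewrite divr_gt0.
have [δ δ0 Gδ] := G_left_box y0 z0 e20.
exists (δ / 2) => [|k y z Ck /andP[yδ yy0] zδ]; first by rewrite divr_gt0.
have [m m0 small] := pdist_small d al_gt0 (le_trans (ltW C_gt0) Ck) e20.
have mδ0 : 0 < Num.min m (δ / 2) by rewrite lt_min m0 divr_gt0.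
have [u [v [Qu [Qv [/andP[yu uy] zv]]]]] := rat_approx_left y z mδ0.
have [mm mδ] : Num.min m (δ / 2) <= m /\ Num.min m (δ / 2) <= δ / 2.
  by rewrite !ge_min !lexx orbT.
apply: le_trans (inf_convr_lbound y z Ck Qu Qv) _.
have pen : k * pdist al y z u v <= e / 2.
  by apply: small; [rewrite ger0_norm; lra | lra].
have : `|G y0 z0 - G u v| < e / 2.
  apply: Gδ; first by apply/andP; split; lra.
  have := ler_distD z z0 v; have := norm_le_enorm (z - v); lra.
rewrite ltr_distlC; lra.
Qed.

Lemma inf_convr_le k y z : C <= k -> inf_convr k y z <= G y z.
Proof.
move=> Ck; apply/ler_addgt0Pr => e e0.
have [δ δ0 up] := inf_convr_upper_near y z e0.
by apply: up => //; rewrite ?lexx ?andbT ?gtrBl ?subrr ?normr0.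
Qed.

Lemma G_lsc y0 z0 e : right_lsc_at y0 z0 -> 0 < e -> exists2 δ, 0 < δ &
  forall u v, `|u - y0| < δ -> `|z0 - v| < δ -> G y0 z0 - e <= G u v.
Proof.
move=> lsc e0; have [δ1 δ10 left] := G_left_box y0 z0 e0.
have [δ2 δ20 right] := G_right_box lsc e0.
exists (Num.min δ1 δ2) => [|u v]; first by rewrite lt_min δ10.
rewrite !lt_min distrC !ltr_distlC => /andP[uy1 uy2] /andP[zv1 zv2].
have [uy|yu|->] := ltgtP u y0.
- have hu : y0 - δ1 < u < y0 by rewrite uy andbT; case/andP: uy1.
  by have := left u v hu zv1; rewrite ltr_distlC => /andP[/ltW].
- have hu : y0 < u < y0 + δ2 by move: uy2 => /andP[_ ->]; rewrite yu.
  exact/ltW/(right u v hu zv2).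
(* [G y0 v] is the limit of [G u v] as [u] increases to [y0] *)
apply/ler_addgt0Pr => η η0; have [δ3 δ30 left_v] := G_left_box y0 v η0.
pose w := y0 - Num.min δ1 δ3 / 2.
have [m1 m3] : Num.min δ1 δ3 <= δ1 /\ Num.min δ1 δ3 <= δ3 by rewrite !ge_min !lexx orbT.
have m0 : 0 < Num.min δ1 δ3 by rewrite lt_min δ10.
have wy : y0 - δ1 < w < y0 /\ y0 - δ3 < w < y0.
  by rewrite /w; split; apply/andP; split; lra.
have := left_v w v wy.2; rewrite subrr normr0 ltr_distlC => /(_ δ30) /andP[_ +].
have := left w v wy.1 zv1; rewrite ltr_distlC => /andP[+ _]; lra.
Qed.

Lemma inf_convr_lower_near y0 z0 e : right_lsc_at y0 z0 -> 0 < e ->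
  exists2 δ, 0 < δ & exists K, forall k y z, K <= k ->
  `|y - y0| < δ -> `|z0 - z| < δ -> G y0 z0 - e <= inf_convr k y z.
Proof.
move=> lsc e0; have [δ δ0 Glsc] := G_lsc lsc e0.
pose h := Num.min (δ / 2) 1.
have h0 : 0 < h by rewrite lt_min ltr01 andbT divr_gt0.
have [hδ h1] : 2 * h <= δ /\ h <= 1.
  split; last by rewrite ge_min lexx orbT.
  have : h <= δ / 2 by rewrite ge_min lexx.
  lra.
pose B := phi + C * (pdist al y0 z0 0 0 + (1 + d%:R `^ al)).
have near_growth y z : `|y - y0| < h -> `|z0 - z| < h ->
    phi + C * (`|y| + enorm z `^ al) <= B.
  move=> yy zz; rewrite lerD2l ler_pM2l//.
  have -> : `|y| + enorm z `^ al = pdist al y z 0 0 by rewrite /pdist !subr0.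
  apply: le_trans (pdist_triangle al_gt0 al_le1 y z y0 z0 0 0) _.
  rewrite [leLHS]addrC lerD2l.
  apply: lerD; first lra.
  apply: ge0_ler_powR; rewrite ?nnegrE ?enorm_ge0 ?ler0n ?(ltW al_gt0)//.
  apply: le_trans (enorm_le_norm _) _; rewrite distrC ler_piMr ?ler0n//; lra.
have B_ge : `|G y0 z0| <= B by apply: le_trans (G_growth _ _) (near_growth _ _ _ _);
  rewrite ?subrr ?normr0.
pose m := Num.min h (h `^ al).
have m0 : 0 < m by rewrite lt_min h0 powR_gt0.
exists h => //; exists (C + (B + `|G y0 z0|) / m) => k y z Kk yy zz.
have BGm : 0 <= (B + `|G y0 z0|) / m.
  exact: divr_ge0 (addr_ge0 (le_trans (normr_ge0 _) B_ge) (normr_ge0 _)) (ltW m0).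
have Ck : C <= k by apply: le_trans Kk; rewrite lerDl.
apply: (le_inf_convr Ck) => u v _ _.
have pen_ge0 : 0 <= k * pdist al y z u v.
  by rewrite mulr_ge0 ?pdist_ge0 // (le_trans (ltW C_gt0) Ck).
have [[uy zv]|far] := pselect (`|u - y0| < 2 * h /\ `|z0 - v| < 2 * h).
  have := Glsc u v (lt_le_trans uy hδ) (lt_le_trans zv hδ); lra.
(* away from (y0, z0), the excess penalty [(k - C) * pdist] beats the growth bound *)
have far_pen : B + `|G y0 z0| <= (k - C) * pdist al y z u v.
  have kC : 0 <= k - C by rewrite subr_ge0.
  apply: le_trans (ler_wpM2l kC (pdist_ge_far al_gt0 h0 yy zz far)).
  by rewrite -ler_pdivrMr // lerBrDr addrC.
have := G_ge_growth y z u v; have := near_growth y z yy zz; have := ler_norm (G y0 z0).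
move: far_pen; rewrite mulrBl; lra.
Qed.

Lemma inf_convr_cvg (k ys : nat -> R) (zs : nat -> 'rV[R]_d) y0 z0 :
  right_lsc_at y0 z0 -> (forall n, C <= k n) -> k n @[n --> \oo] --> +oo ->
  (forall n, ys n < y0) -> ys @ \oo --> y0 -> zs @ \oo --> z0 ->
  (fun n => inf_convr (k n) (ys n) (zs n)) @ \oo --> G y0 z0.
Proof.
move=> lsc Ck /cvgryPgt k_oo ys_lt /cvgrPdist_lt ys_cvg /cvgrPdist_lt zs_cvg.
apply/cvgrPdist_le => e e0.
have [δ1 δ10 up] := inf_convr_upper_near y0 z0 e0.
have [δ2 δ20 [K low]] := inf_convr_lower_near lsc e0.
have δ0 : 0 < Num.min δ1 δ2 by rewrite lt_min δ10.
have [m1 m2] : Num.min δ1 δ2 <= δ1 /\ Num.min δ1 δ2 <= δ2 by rewrite !ge_min !lexx orbT.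
apply: filterS2 (filterI (ys_cvg _ δ0) (zs_cvg _ δ0)) (k_oo K) => n [yn zn] Kn.
rewrite ltr_distlC in yn; rewrite ler_distlC; apply/andP; split.
  by apply: low (ltW Kn) _ _; rewrite ?ltr_distlC; [apply/andP; split|]; lra.
by apply: up => //; [rewrite (ltW (ys_lt n)) andbT|]; lra.
Qed.

Lemma inf_convr_norm_le k y z : C <= k ->
  `|inf_convr k y z| <= phi + C * (`|y| + enorm z `^ al).
Proof.
move=> Ck; rewrite ler_norml (inf_convr_ge y z Ck) /=.
exact: le_trans (inf_convr_le y z Ck) (le_trans (ler_norm _) (G_growth y z)).
Qed.

End inf_convolution.

Section rational_points.
Context {R : realType} {d : nat}.

Definition rat_point (j : nat) : R * 'rV[R]_d :=
  if @unpickle (rat * 'rV[rat]_d)%type j is Some (q, V) then (ratr q, map_mx ratr V)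
  else (0, 0).

Lemma rat_pointP j : Qset (rat_point j).1 /\ Qrow (rat_point j).2.
Proof.
rewrite /rat_point; case: unpickle => [[q V]|] /=.
  by split; [exists q | move=> i; exists (V ord0 i); rewrite mxE].
by split; [exists 0%Q; rewrite rmorph0 | move=> i; exists 0%Q; rewrite rmorph0 mxE].
Qed.

Lemma rat_point_surj u v : Qset u -> Qrow v -> exists j, rat_point j = (u, v).
Proof.
move=> [q ->] /choice[f fP]; exists (pickle (q, \row_i f i)).
by rewrite /rat_point pickleK; congr pair; apply/rowP => i; rewrite !mxE fP.
Qed.

Lemma inf_conv_rat_points al (G : R -> 'rV[R]_d -> R) k y z :
  inf_conv al G k y z =
  ereal_inf (range (fun j =>
    let p := rat_point j in (G p.1 p.2 + k * pdist al y z p.1 p.2)%:E)).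
Proof.
congr ereal_inf; apply/seteqP; split=> [_ [u [v [Qu [Qv ->]]]]|_ [j _ <-]].
  by have [j ej] := rat_point_surj Qu Qv; exists j; last rewrite ej.
by have [Qu Qv] := rat_pointP j; exists (rat_point j).1, (rat_point j).2.
Qed.

End rational_points.

Section progressive_processes.
Variables (R : realType) (d0 : measure_display) (Om : measurableType d0).
Variables (F : R -> set (set Om)) (T : R).
Hypothesis F_filtration : is_filtration F.

Lemma measurable_prog_slice t :
  measurable ([set p | 0 <= p.1 <= t] : set (g_sigma_algebraType (prog_rect F t))).
Proof.
have [F_sigma [_ _]] := F_filtration.
apply: sub_gen_smallest; exists `[0, t]%classic, setT; split => //; split=> //.
split; first by have [F0 FC _] := F_sigma t; rewrite -(setD0 setT); exact: FC.
by apply/seteqP; split=> [p /= pt|p /= [pt _]]; rewrite /= in_itv in pt *.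
Qed.

Lemma progressive_measurable X t : progressive F T X -> 0 <= t <= T ->
  measurable_fun ([set p | 0 <= p.1 <= t] : set (g_sigma_algebraType (prog_rect F t)))
    (fun p => X p.2 p.1).
Proof. by move=> X_prog tT _ B mB; exact: X_prog. Qed.

Lemma progressiveDr X c : progressive F T X -> progressive F T (fun w t => X w t + c).
Proof.
move=> X_prog t tT B mB.
have := measurable_funD (progressive_measurable X_prog tT) (measurable_cst c).
by move/(_ (@measurable_prog_slice t) B mB).
Qed.

Lemma progressive_fine_inf (h : nat -> Om -> R -> R) :
  (forall j, progressive F T (h j)) ->
  progressive F T (fun w t => fine (ereal_inf (range (fun j => (h j w t)%:E)))).
Proof.
move=> h_prog; have -> : (fun w t => fine (ereal_inf (range (fun j => (h j w t)%:E)))) =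
    (fun w t => fine (einfs (fun j => (h j w t)%:E) 0)).
  apply/funext => w; apply/funext => t; congr (fine (ereal_inf _)).
  by apply/seteqP; split=> _ [j _ <-]; exists j.
move=> t tT B mB.
pose D := [set p | 0 <= p.1 <= t] : set (g_sigma_algebraType (prog_rect F t)).
have h_meas j : measurable_fun D (fun p => (h j p.2 p.1)%:E).
  by apply/measurable_EFinP; exact: (progressive_measurable (h_prog j) tT).
have := measurableT_comp (fine_measurable measurableT) (measurable_fun_einfs h_meas 0).
by move/(_ (@measurable_prog_slice t) B mB).
Qed.

End progressive_processes.

Lemma cvgy_natrS_mul (R : realType) (C : R) : 0 < C -> n.+1%:R * C @[n --> \oo] --> +oo.
Proof.
move=> C0; apply/cvgryPgt => A; apply: filterS (nbhs_infty_gtr (A / C)) => n.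
rewrite ltr_pdivrMr// => /lt_le_trans; apply.
by rewrite ler_pM2r// ler_nat.
Qed.

Lemma ae_PdTS2 (R : realType) d0 (Om : measurableType d0) (P : probability Om R) (T : R)
    (Q1 Q2 Q3 : Om -> R -> Prop) :
  ae_PdT P T Q1 -> ae_PdT P T Q2 -> (forall w t, Q1 w t -> Q2 w t -> Q3 w t) ->
  ae_PdT P T Q3.
Proof.
move=> Q1ae Q2ae Q123.
have ae_filter := ae_filter_ringOfSetsType (P \x (@lebesgue_measure R))%E.
apply: (filterS2 ae_filter _ Q1ae Q2ae) => p Q1p Q2p pT; exact: Q123 (Q1p pT) (Q2p pT).
Qed.

Section gn.
Variables (R : realType) (d : nat) (d0 : measure_display) (Om : measurableType d0).
Variables (g : Om -> R -> R -> 'rV[R]_d -> R) (C al : R) (n : nat).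

Lemma gn_infE w t y z : gn_inf g C al n w t y z = inf_conv al (g w t) (n%:R * C) y z.
Proof. by []. Qed.

Lemma gnE w t y z : gn g C al n w t y z = inf_convr al (g w t) (n%:R * C) y z.
Proof. by []. Qed.

Lemma progressive_gn (F : R -> set (set Om)) (T : R) y z : is_filtration F ->
  (forall u v, progressive F T (fun w t => g w t u v)) ->
  progressive F T (fun w t => gn g C al n w t y z).
Proof.
move=> F_filt g_prog.
have -> : (fun w t => gn g C al n w t y z) = fun w t => fine (ereal_inf (range (fun j =>
    let p := rat_point j in (g w t p.1 p.2 + n%:R * C * pdist al y z p.1 p.2)%:E))).
  by apply/funext => w; apply/funext => t; rewrite gnE /inf_convr inf_conv_rat_points.
by apply: (progressive_fine_inf F_filt) => j; apply: (progressiveDr F_filt).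
Qed.

End gn.

Unset Implicit Arguments.
Set Strict Implicit.

Theorem proposition2 (R : realType) (T : R) (d : nat) (d0 : measure_display)
  (Om : measurableType d0) (P : probability Om R) (F : R -> set (set Om))
  (g : Om -> R -> R -> 'rV[R]_d -> R) (f : Om -> R -> R) (C alpha : R) :
  0 < T -> (0 < d)%N -> is_filtration F ->
  (* g is a generator *)
  (forall y z, progressive F T (fun w t => g w t y z)) ->
  (* (H1a) *)
  ae_PdT P T (fun w t => forall (y0 : R) (z0 : 'rV[R]_d),
     (fun p => g w t p.1 p.2) @ filter_prod y0^'- (nbhs z0) --> g w t y0 z0 /\
     ((g w t y0 z0)%:E <=
        limf_einf (fun p => (g w t p.1 p.2)%:E) (filter_prod y0^'+ (nbhs z0)))%E) ->
  (* (H5) *)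
  0 < C -> 0 < alpha < 1 ->
  (forall w t, 0 <= f w t) -> progressive F T f ->
  (P \x (@lebesgue_measure R))%E.-integrable [set p | 0 <= p.2 <= T]
     (fun p => (f p.1 p.2)%:E) ->
  ae_PdT P T (fun w t => forall y z,
     `|g w t y z| <= f w t + C * (`|y| + enorm z `^ alpha)) ->
  (* (i) *)
  (forall n : nat, (0 < n)%N ->
     (forall y z, progressive F T (fun w t => gn g C alpha n w t y z)) /\
     ae_PdT P T (fun w t => forall y z, gn_inf g C alpha n w t y z \is a fin_num))
  /\
  (* (ii) *)
  (forall n : nat, (0 < n)%N -> forall y z, ae_PdT P T (fun w t =>
     gn g C alpha n w t y z <= gn g C alpha n.+1 w t y z <= g w t y z /\
     `|gn g C alpha n w t y z| <= f w t + C * (`|y| + enorm z `^ alpha)))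
  /\
  (* (iii) *)
  (forall n : nat, (0 < n)%N -> forall y1 y2 z1 z2, ae_PdT P T (fun w t =>
     `|gn g C alpha n w t y1 z1 - gn g C alpha n w t y2 z2|
       <= n%:R * C * (`|y1 - y2| + enorm (z1 - z2) `^ alpha)))
  /\
  (* (iv): the sequence (y_n, z_n)_{n >= 1} is (ys n, zs n) with index shift n+1 *)
  (forall (ys : nat -> R) (zs : nat -> 'rV[R]_d) (y0 : R) (z0 : 'rV[R]_d),
     (forall n, ys n < y0) -> ys @ \oo --> y0 -> zs @ \oo --> z0 ->
     ae_PdT P T (fun w t =>
       (fun n => gn g C alpha n.+1 w t (ys n) (zs n)) @ \oo --> g w t y0 z0)).
Proof.
move=> _ _ F_filt g_prog H1a C_gt0 /andP[al_gt0 /ltW al_le1] _ _ _ H5.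
have nC n : (0 < n)%N -> C <= n%:R * C by move=> n0; rewrite ler_peMl ?(ltW C_gt0) ?ler1n.
split; [|split; [|split]].
- move=> n n0; split=> [y z|]; first exact: progressive_gn.
  apply: (ae_PdTS2 H1a H5) => w t _ growth y z; rewrite gn_infE.
  exact: (inf_conv_fin al_gt0 al_le1 C_gt0 growth _ _ (nC n n0)).
- move=> n n0 y z; apply: (ae_PdTS2 H1a H5) => w t cont growth.
  have left_cont y0 z0 := (cont y0 z0).1.
  have nC' : C <= n.+1%:R * C by exact: nC.
  have nCS : n%:R * C <= n.+1%:R * C by rewrite ler_pM2r // ler_nat.
  rewrite !gnE; split.
    rewrite (inf_convr_homo al_gt0 al_le1 C_gt0 growth _ _ (nC n n0) nCS).
    by rewrite (inf_convr_le al_gt0 al_le1 C_gt0 growth left_cont _ _ nC').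
  exact: (inf_convr_norm_le al_gt0 al_le1 C_gt0 growth left_cont _ _ (nC n n0)).
- move=> n n0 y1 y2 z1 z2; apply: (ae_PdTS2 H1a H5) => w t _ growth.
  exact: (inf_convr_lipschitz al_gt0 al_le1 C_gt0 growth _ _ _ _ (nC n n0)).
- move=> ys zs y0 z0 ys_lt ys_cvg zs_cvg; apply: (ae_PdTS2 H1a H5) => w t cont growth.
  have left_cont y z := (cont y z).1.
  apply: (inf_convr_cvg al_gt0 al_le1 C_gt0 growth left_cont (k := fun n => n.+1%:R * C))
    => //; [exact: (cont y0 z0).2 | move=> n; exact: nC | exact: cvgy_natrS_mul C_gt0].
Qed.
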